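(* Let $q$ be a prime power, $1\le k<n$, let $g_1,\dots,g_n\in\mathbb{F}_{q^n}$ be linearly independent over $\mathbb{F}_q$, and let $\mathcal{G}$ be the Gabidulin code over $\mathbb{F}_{q^n}$ (so $m=n$) of dimension $k$ with respect to $g_1,\dots,g_n$. Let $f(x)=x^{q^{n-1}}+f_{\le k-1}(x)$, where $f_{\le k-1}\in\mathcal{L}_q(x,\mathbb{F}_{q^n})$ is zero or has $q$-degree at most $k-1$. Then $\sigma_f=(f(g_1),\dots,f(g_n))$ is a deep hole of $\mathcal{G}$ in the rank metric, i.e. $d_R(\sigma_f,\mathcal{G})=n-k$.
   Context: $\mathcal{L}_q(x,\mathbb{F}_{q^n})$ is the set of $q$-linearized polynomials $\sum_i a_ix^{q^i}$ with $a_i\in\mathbb{F}_{q^n}$, $q$-degree being the largest $i$ with $a_i\ne0$. Rank distance: $d_R(\mathbf{u},\mathbf{v})=\dim_{\mathbb{F}_q}\langle u_1-v_1,\dots,u_n-v_n\rangle$, $d_R(\mathbf{u},C)=\min_{\mathbf{c}\in C}d_R(\mathbf{u},\mathbf{c})$; a deep hole is a word attaining the covering radius $\max_{\mathbf{u}}d_R(\mathbf{u},C)$, which for $\mathcal{G}$ is $n-k$. The Gabidulin code of dimension $k$ is $\mathcal{G}=\{(v(g_1),\dots,v(g_n)) : v\in\mathcal{L}_q(x,\mathbb{F}_{q^n}),\ v=0\text{ or }\deg_q(v)<k\}$. *)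

From HB Require Import structures.
From mathcomp Require Import all_boot all_order all_algebra all_fingroup all_field.
Set Implicit Arguments. Unset Strict Implicit. Unset Printing Implicit Defensive.
Import GRing.Theory.
Local Open Scope ring_scope.

(* Setting: F = F_q is a finite field (so q = #|F| is a prime power),
   L is a finite-dimensional field extension of F (L = F_{q^m}). *)

Definition lin_eval (F : finFieldType) (L : fieldExtType F) (a : seq L) (x : L) : L :=
  \sum_(i < size a) a`_i * x ^+ (#|F| ^ i)%N.

Definition rank_dist (F : finFieldType) (L : fieldExtType F) (n : nat)
    (u v : 'I_n -> L) : nat :=
  \dim (<< [seq u i - v i | i <- enum 'I_n] >>)%VS.

Definition evalvec (F : finFieldType) (L : fieldExtType F) (n : nat)
    (a : seq L) (g : 'I_n -> L) : 'I_n -> L :=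
  fun i => lin_eval a (g i).

(* Membership in the Gabidulin code of dimension k: c = (v(g_1),...,v(g_n))
   for some linearized v which is 0 or has q-degree < k, i.e. a coefficient
   list of length at most k. *)
Definition in_gabidulin (F : finFieldType) (L : fieldExtType F) (n k : nat)
    (g : 'I_n -> L) (c : 'I_n -> L) : Prop :=
  exists a : seq L, (size a <= k)%N /\ c =1 evalvec a g.

From HB Require Import structures.
From mathcomp Require Import all_boot all_order all_algebra all_fingroup all_field.
Set Implicit Arguments. Unset Strict Implicit. Unset Printing Implicit Defensive.
Import GRing.Theory.
Local Open Scope ring_scope.

(* A codeword of the Gabidulin code is the evaluation at g of a linearized
   polynomial a with at most k coefficients, so sigma minus it is the
   evaluation at the basis g of the F-linear map
   x |-> x^(q^(n-1)) + (b - a)(x), and the rank distance is the dimension of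
   the image of that map.  Since x^(q^n) = x, its kernel lies in the kernel of
   x |-> x + ((b - a)(x))^q, a nonzero linearized polynomial of q-degree at
   most k, which has at most q^k roots: the distance is at least n - k.
   Interpolating x^(q^(n-1)) + b(x) on g_1, ..., g_k by a linearized
   polynomial with k coefficients (the Moore matrix of independent elements is
   invertible) gives a codeword whose distance is at most n - k. *)

Lemma dim_span_map_take0 (K : fieldType) (vT : vectType K) (T : eqType)
    (f : T -> vT) (s : seq T) k :
  {in take k s, forall x, f x = 0} -> (\dim << map f s >> <= size s - k)%N.
Proof.
move=> f_take0; rewrite -{1}(cat_take_drop k s) map_cat span_cat.
have -> : << map f (take k s) >>%VS = 0%VS.
  apply/eqP; rewrite -subv0; apply/span_subvP => _ /mapP[x /f_take0 -> ->].
  exact: mem0v.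
by rewrite add0v (leq_trans (dim_span _)) // size_map size_drop.
Qed.

Lemma eq_rank_dist (F : finFieldType) (L : fieldExtType F) n (u c c' : 'I_n -> L) :
  c =1 c' -> rank_dist u c = rank_dist u c'.
Proof. by move=> eq_c; rewrite /rank_dist; under eq_map do rewrite eq_c. Qed.

Section LinearizedPolynomials.
Variables (F : finFieldType) (L : fieldExtType F).
Local Notation q := #|F|.
Local Notation lin_eval := (@lin_eval F L).

Lemma pchar_nat_expq j : [pchar L].-nat (q ^ j)%N.
Proof.
have [p p_pr pcharFp] := finPcharP F.
rewrite (card_pprimeChar pcharFp) -expnM pnatX pnatE //.
by rewrite (pchar_lalg L) pcharFp.
Qed.

Lemma expqD j (x y : L) : (x + y) ^+ (q ^ j)%N = x ^+ (q ^ j)%N + y ^+ (q ^ j)%N.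
Proof. exact/exprDn_pchar/pchar_nat_expq. Qed.

Lemma expqN j (x : L) : (- x) ^+ (q ^ j)%N = - x ^+ (q ^ j)%N.
Proof.
apply: (addrI (x ^+ (q ^ j)%N)); rewrite -expqD !subrr expr0n.
by rewrite expn_eq0 gtn_eqF // ltnW // finNzRing_gt1.
Qed.

Lemma expqZ j (c : F) (x : L) : (c *: x) ^+ (q ^ j)%N = c *: x ^+ (q ^ j)%N.
Proof.
elim: j => [|j IHj]; first by rewrite !expr1.
by rewrite expnSr !exprM IHj exprZn expf_card.
Qed.

Lemma expq_dimv (x : L) : x ^+ (q ^ \dim {: L})%N = x.
Proof.
pose fL := FinFieldExtType L.
have cardL : #|fL| = (q ^ \dim {: L})%N.
  rewrite -(@card_vspace F (finvect_type L) _ fullv).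
  by apply: eq_card => y; rewrite inE memvf.
by rewrite -cardL; apply: (@expf_card fL).
Qed.

Lemma lin_eval_is_linear (a : seq L) : linear (lin_eval a).
Proof.
move=> c x y; rewrite /lin_eval scaler_sumr -big_split /=; apply: eq_bigr => i _.
by rewrite expqD expqZ mulrDr scalerAr.
Qed.
HB.instance Definition _ (a : seq L) :=
  GRing.isLinear.Build F L L *:%R (lin_eval a) (lin_eval_is_linear a).

Lemma expq_sum I (r : seq I) (P : pred I) (G : I -> L) :
  (\sum_(i <- r | P i) G i) ^+ q = \sum_(i <- r | P i) G i ^+ q.
Proof.
have expq1D (x y : L) : (x + y) ^+ q = x ^+ q + y ^+ q.
  by have := expqD 1 x y; rewrite expn1.
by apply: (big_morph _ expq1D); rewrite expr0n gtn_eqF // ltnW // finNzRing_gt1.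
Qed.

Lemma lin_eval_cons_expq c (h : seq L) x :
  lin_eval (c :: map (fun y => y ^+ q) h) x = c * x + lin_eval h x ^+ q.
Proof.
rewrite /lin_eval /= size_map big_ord_recl /= expn0 expr1 expq_sum.
congr (_ + _); apply: eq_bigr => i _; rewrite add0n (nth_map 0) //.
by rewrite exprMn -exprM -expnSr /bump /= add1n.
Qed.

Definition linpoly (a : seq L) : {poly L} := \sum_(i < size a) a`_i *: 'X^(q ^ i).

Lemma horner_linpoly a x : (linpoly a).[x] = lin_eval a x.
Proof.
by rewrite /linpoly horner_sum; apply: eq_bigr => i _; rewrite hornerZ hornerXn.
Qed.

Lemma size_linpoly a : (size (linpoly a) <= (q ^ (size a).-1).+1)%N.
Proof.
apply: leq_trans (size_sum _ _ _) _; apply/bigmax_leqP => i _.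
apply: leq_trans (size_scale_leq _ _) _; rewrite size_polyXn ltnS leq_exp2l.
  by rewrite -ltnS prednK // (leq_ltn_trans _ (ltn_ord i)).
exact: finNzRing_gt1.
Qed.

Lemma coef_linpoly_expq a i : (i < size a)%N -> (linpoly a)`_(q ^ i) = a`_i.
Proof.
move=> lt_i_a; rewrite /linpoly coef_sum (bigD1 (Ordinal lt_i_a)) //=.
rewrite coefZ coefXn eqxx mulr1 big1 ?addr0 // => j ne_ji.
have /negbTE ne_ij : i != j by rewrite eq_sym.
by rewrite coefZ coefXn eqn_exp2l ?finNzRing_gt1 // ne_ij mulr0.
Qed.

Lemma linpoly_neq0 a : has (fun c => c != 0) a -> linpoly a != 0.
Proof.
case/hasP=> c /(nthP 0)[i lt_i_a <-] nz_ai.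
by apply: contraNneq nz_ai => a0; rewrite -coef_linpoly_expq // a0 coef0.
Qed.

(* The kernel consists of q ^ dim roots of linpoly a, which has degree at most
   q ^ (size a).-1. *)
Lemma dim_lker_lin_eval a :
  has (fun c => c != 0) a -> (\dim (lker (linfun (lin_eval a))) < size a)%N.
Proof.
move=> nz_a; pose fL := FinFieldExtType L; set U := lker _.
have q_gt1 : (1 < q)%N := finNzRing_gt1 F.
have roots_a : all (root (linpoly a)) (enum [pred x : fL | x \in U]).
  apply/allP => x x_U; have : (x : fL) \in [pred y | y \in U] by rewrite -mem_enum.
  by rewrite inE memv_ker lfunE /root horner_linpoly.
have U_lt_a : (#|[pred x : fL | x \in U]| < size (linpoly a))%N.
  have := max_poly_roots (linpoly_neq0 nz_a) roots_a (enum_uniq _).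
  by rewrite cardE.
move: (leq_trans U_lt_a (size_linpoly a)).
rewrite (@card_vspace F (finvect_type L) _ U) ltnS leq_exp2l // => le_U_a.
have a_gt0 : (0 < size a)%N by case: (a) nz_a.
by rewrite (leq_ltn_trans le_U_a) // prednK.
Qed.

Definition monic_lin_eval j (h : seq L) x := x ^+ (q ^ j) + lin_eval h x.

Lemma monic_lin_eval_is_linear j h : linear (monic_lin_eval j h).
Proof.
move=> c x y; rewrite /monic_lin_eval linearP expqD expqZ scalerDr.
by rewrite -!addrA; congr (_ + _); rewrite addrCA.
Qed.
HB.instance Definition _ j h :=
  GRing.isLinear.Build F L L *:%R (monic_lin_eval j h) (monic_lin_eval_is_linear j h).

(* On the kernel x^(q^j) = -h(x); raising to the q-th power gives
   x = -h(x)^q, a root of the linearized polynomial x + h(x)^q. *)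
Lemma dim_lker_monic_lin_eval j h :
  \dim {: L} = j.+1 -> (\dim (lker (linfun (monic_lin_eval j h))) <= size h)%N.
Proof.
move=> dimL; pose h1 := 1 :: map (fun y => y ^+ q) h.
have /dim_lker_lin_eval : has (fun c => c != 0) h1 by rewrite /= oner_eq0.
rewrite /= size_map ltnS; apply: leq_trans; apply: dimvS; apply/subvP => x.
rewrite !memv_ker !lfunE /= /monic_lin_eval addr_eq0 => /eqP xqj.
have := expqN 1 (lin_eval h x); rewrite expn1 -xqj -exprM -expnSr -dimL expq_dimv.
by move=> x_eq; rewrite lin_eval_cons_expq mul1r {1}x_eq addNr.
Qed.

Lemma dim_span_monic_lin_eval j h (G : seq L) :
  <<G>>%VS = fullv -> \dim {: L} = j.+1 ->
  (\dim {: L} - size h <= \dim << map (monic_lin_eval j h) G >>)%N.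
Proof.
move=> spanG dimL; set f := linfun (monic_lin_eval j h).
have -> : map (monic_lin_eval j h) G = map f G by apply: eq_map => x; rewrite lfunE.
rewrite -limg_span spanG -(limg_ker_dim f fullv) capfv leq_subLR leq_add2r.
exact: dim_lker_monic_lin_eval.
Qed.

Definition moore (X : seq L) k : 'M[L]_k := \matrix_(i, j) X`_j ^+ (q ^ i).

Definition row_coefs k (v : 'rV[L]_k) : seq L := [seq v 0 i | i <- enum 'I_k].

Lemma mul_row_moore k (v : 'rV[L]_k) X j :
  (v *m moore X k) 0 j = lin_eval (row_coefs v) X`_j.
Proof.
rewrite mxE /lin_eval size_map size_enum_ord; apply: eq_bigr => i _.
by rewrite mxE (nth_map i) ?size_enum_ord // nth_ord_enum.
Qed.

Lemma moore_unitmx (X : seq L) k : free X -> size X = k -> moore X k \in unitmx.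
Proof.
move=> freeX sizeX; rewrite -row_free_unit; apply: inj_row_free => v vM0.
have X_ker : (<<X>> <= lker (linfun (lin_eval (row_coefs v))))%VS.
  apply/span_subvP => _ /(nthP 0)[j lt_jX <-]; rewrite memv_ker lfunE /=.
  have lt_jk : (j < k)%N by rewrite -sizeX.
  by rewrite -(mul_row_moore v X (Ordinal lt_jk)) vM0 mxE.
apply/rowP => i; rewrite mxE; apply/eqP/contraT => nz_vi.
have nz_v : has (fun c => c != 0) (row_coefs v).
  by apply/hasP; exists (v 0 i) => //; apply: map_f; rewrite mem_enum.
have := leq_ltn_trans (dimvS X_ker) (dim_lker_lin_eval nz_v).
by rewrite (eqnP freeX) sizeX size_map size_enum_ord ltnn.
Qed.

Lemma lin_eval_interpolate (X : seq L) k (t : 'I_k -> L) :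
  free X -> size X = k ->
  exists2 a : seq L, size a = k & forall j : 'I_k, lin_eval a X`_j = t j.
Proof.
move=> freeX sizeX; pose w := \row_j t j *m invmx (moore X k).
exists (row_coefs w); first by rewrite size_map size_enum_ord.
by move=> j; rewrite -mul_row_moore mulmxKV ?moore_unitmx // mxE.
Qed.

Lemma lin_eval_widen N a x : (size a <= N)%N ->
  lin_eval a x = \sum_(i < N) a`_i * x ^+ (q ^ i).
Proof.
move=> le_aN; rewrite /lin_eval (big_ord_widen N (fun i => a`_i * x ^+ (q ^ i)) le_aN).
rewrite big_mkcond; apply: eq_bigr => i _; case: ltnP => // le_a_i.
by rewrite nth_default ?mul0r.
Qed.

Lemma monic_lin_evalB j N a b x : (size a <= N)%N -> (size b <= N)%N ->
  monic_lin_eval j a x - lin_eval b x =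
  monic_lin_eval j (mkseq (fun i => a`_i - b`_i) N) x.
Proof.
move=> le_aN le_bN; rewrite /monic_lin_eval -addrA (lin_eval_widen _ le_aN).
rewrite (lin_eval_widen _ le_bN) (lin_eval_widen _ (eq_leq (size_mkseq _ _))) -sumrB.
by congr (_ + _); apply: eq_bigr => i _; rewrite nth_mkseq // mulrBl.
Qed.

End LinearizedPolynomials.

Theorem proposition4 (F : finFieldType) (L : fieldExtType F) (n k : nat)
    (hdim : \dim {: L} = n) (hk1 : (1 <= k)%N) (hkn : (k < n)%N)
    (g : 'I_n -> L) (hg : free [seq g i | i <- enum 'I_n])
    (b : seq L) (hb : (size b <= k)%N) :
  let sigma : 'I_n -> L :=
    fun i => g i ^+ (#|F| ^ n.-1)%N + lin_eval b (g i) in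
  (forall c, in_gabidulin k g c -> (n - k <= rank_dist sigma c)%N) /\
  (exists2 c, in_gabidulin k g c & rank_dist sigma c = (n - k)%N).
Proof.
move=> sigma; set G := [seq g i | i <- enum 'I_n].
have sizeG : size G = n by rewrite size_map size_enum_ord.
have spanG : <<G>>%VS = fullv.
  by apply/eqP; rewrite eqEdim subvf (eqnP hg) sizeG hdim /=.
have dimL : \dim {: L} = n.-1.+1 by rewrite hdim prednK // (leq_ltn_trans _ hkn).
pose f a := monic_lin_eval n.-1 (mkseq (fun i => b`_i - a`_i) k).
have rank_dist_eval a : (size a <= k)%N ->
    rank_dist sigma (evalvec a g) = \dim << map (f a) G >>.
  move=> le_ak; rewrite /rank_dist; congr (\dim <<_>>); rewrite -[RHS]map_comp.
  by apply: eq_map => i; apply: monic_lin_evalB.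
have lower a : (size a <= k)%N -> (n - k <= rank_dist sigma (evalvec a g))%N.
  move=> le_ak; rewrite rank_dist_eval //.
  by have := dim_span_monic_lin_eval (mkseq (fun i => b`_i - a`_i) k) spanG dimL;
    rewrite size_mkseq hdim.
split=> [c [a [le_ak /eq_rank_dist ->]]|]; first exact: lower.
pose X := take k G.
have freeX : free X by apply: (@catl_free _ _ (drop k G)); rewrite cat_take_drop.
have sizeX : size X = k by rewrite size_takel // sizeG ltnW.
have [a size_a interp_a] :=
  lin_eval_interpolate (fun j : 'I_k => monic_lin_eval n.-1 b X`_j) freeX sizeX.
have le_ak : (size a <= k)%N by rewrite size_a.
exists (evalvec a g); first by exists a.
apply/eqP; rewrite eqn_leq lower // andbT rank_dist_eval // -sizeG.
apply: dim_span_map_take0 => _ /(nthP 0)[j lt_jX <-].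
have lt_jk : (j < k)%N by rewrite -sizeX.
by rewrite /f -monic_lin_evalB // (interp_a (Ordinal lt_jk)) subrr.
Qed.
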